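(* Under the hypotheses of the preceding theorem (weighted species $\mathcal{F}^\upsilon,\mathcal{G}^\gamma$ with $\mathcal{G}^\gamma(z)=\sum_ia_iz^i$ of radius of convergence $0$, $\mathcal{F}^\upsilon(z)$ of positive radius of convergence, $a_i=0$ unless $i\equiv1\pmod d$ for some $d\ge1$, $a_i>0$ for all $i\ge I$ with $i\equiv 1\pmod d$, and $\sum_{i_1+\dots+i_k=n,\ 1\le i_j<n-(k-1)}a_{i_1}\cdots a_{i_k}=o(a_{n-(k-1)})$ for every $k\ge2$), assume additionally that $[z^1]\mathcal{F}^\upsilon(z)>0$ and $a_1,a_2>0$. Then the random composite structure $\mathsf{S}_n$ drawn from $(\mathcal{F}^\upsilon\circ\mathcal{G}^\gamma)[[n]]$ with probability proportional to its weight consists of a single component with probability tending to $1$ as $n\to\infty$.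
   Context: A weighted species $\mathcal{F}^\upsilon$ assigns to each finite set $U$ a finite set $\mathcal{F}[U]$, functorial transport bijections, and relabelling-invariant weights $\upsilon\ge0$; $\mathcal{F}^\upsilon(z)=\sum_n|\mathcal{F}[n]|_\upsilon z^n/n!$ with $|\mathcal{F}[n]|_\upsilon$ the total weight of $\mathcal{F}[\{1,\dots,n\}]$. The composition $\mathcal{F}\circ\mathcal{G}$ (for $\mathcal{G}[\emptyset]=\emptyset$) has structures $(\pi,F,(G_Q)_{Q\in\pi})$ on $U$, with $\pi$ a partition of $U$ into non-empty blocks, $F\in\mathcal{F}[\pi]$, $G_Q\in\mathcal{G}[Q]$, weight $\upsilon(F)\prod_Q\gamma(G_Q)$; the $G_Q$ are its components. *)

From mathcomp Require Import all_boot.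
From Stdlib Require Import Reals.

Set Implicit Arguments.
Unset Strict Implicit.
Unset Printing Implicit Defensive.

Definition rsum_list (l : list R) : R := List.fold_right Rplus 0%R l.
Definition rprod_list (l : list R) : R := List.fold_right Rmult 1%R l.

(* A weighted species is represented by its sequence of total weights
   w n = |F[n]|_upsilon (relabelling invariance makes |F[U]|_upsilon depend
   only on #|U|). *)
Definition egf_coef (w : nat -> R) (n : nat) : R := (w n / INR (Stdlib.Arith.Factorial.fact n))%R.

Definition set_partitions (n : nat) : {set {set {set 'I_n}}} :=
  [set P : {set {set 'I_n}} | partition P [set: 'I_n]].

(* Weight of the composite structures (pi, F, (G_Q)) with pi in a given event:
   summing over F in F[pi] and G_Q in G[Q] gives f(#|pi|) * prod_Q g(#|Q|). *)
Definition comp_weight (f g : nat -> R) (n : nat)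
    (E : {set {set 'I_n}} -> bool) : R :=
  rsum_list [seq (f #|P| * rprod_list [seq g #|B| | B : {set 'I_n} <- enum P])%R
            | P : {set {set 'I_n}} <- enum (set_partitions n) & E P].

Arguments comp_weight f g n E : clear implicits.

Definition prob_single_component (f g : nat -> R) (n : nat) : R :=
  (comp_weight f g n (fun P => #|P| == 1%nat) /
   comp_weight f g n (fun _ => true))%R.

Fixpoint csum (a : nat -> R) (k n m : nat) : R :=
  match k with
  | O => if n == 0%nat then 1%R else 0%R
  | S k' => rsum_list [seq (if (i <= n)%nat then a i * csum a k' (n - i) m
                            else 0)%R | i <- iota 1 (m - 1)]
  end.

Definition conv_sum (a : nat -> R) (k n : nat) : R := csum a k n (n - (k - 1)).

From mathcomp Require Import all_boot.
From Stdlib Require Import Reals.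
From mathcomp Require Import order ssralg ssrnum Rstruct ring lra zify.
Import Order.TTheory GRing.Theory Num.Theory.

(* Write a_n = |G[n]|/n!, A(z) = sum_n a_n z^n and s_n = a_0 + ... + a_n.  Grouping the
   composite structures on [n] by their number k of components (exponential formula), those
   with k components weigh n! (f_k / k!) [z^n] A(z)^k, and those with one component weigh
   n! f_1 a_n.  As f_k / k! <= l rho^k, it suffices that sum_(k >= 2) rho^k [z^n] A^k = o(a_n).
   The k = 2 hypothesis and a_2 > 0 give a_(n-1) = o(a_n); hence s_n = O(a_n) and
   s_(n-1) = o(s_n), while [z^n] A^2 = O(a_(n-1)) yields sum_s a_s s_(j+1-s) <= C s_j.
   Inductively [z^m] A^(k+1) <= C^k s_(m-k), so the tail is at most
   rho^2 C sum_j (rho C)^j s_(n-1-j), which is O(s_(n-1)) = o(a_n). *)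

Set Implicit Arguments.
Unset Strict Implicit.
Unset Printing Implicit Defensive.

Local Open Scope ring_scope.

Definition eventually (P : nat -> Prop) := exists N, forall n, (N <= n)%nat -> P n.

Lemma eventually_and (P Q : nat -> Prop) :
  eventually P -> eventually Q -> eventually (fun n => P n /\ Q n).
Proof.
move=> [M HP] [N HQ]; exists (maxn M N) => n; rewrite geq_max => /andP[Mn Nn].
by split; [apply: HP | apply: HQ].
Qed.

Lemma eventually_succ (P : nat -> Prop) : eventually (fun m => P m.+1) -> eventually P.
Proof. by move=> [N HN]; exists N.+1 => -[|n] //; rewrite ltnS => /HN. Qed.

Lemma nat_ind_from (P : nat -> Prop) N :
  P N -> (forall n, (N <= n)%nat -> P n -> P n.+1) -> forall n, (N <= n)%nat -> P n.
Proof.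
move=> PN PS n /subnK <-; elim: (n - N)%nat => // t IH.
by rewrite addSn; apply: PS => //; apply: leq_addl.
Qed.

Lemma egf_coefE (w : nat -> R) k : egf_coef w k = w k / k`!%:R.
Proof. by rewrite /egf_coef RdivE INRE factE. Qed.

Definition conv (a b : nat -> R) m := \sum_(i < m.+1) a i * b (m - i)%nat.

Fixpoint conv_pow (a : nat -> R) k : nat -> R :=
  if k is k'.+1 then conv a (conv_pow a k') else fun m => (m == 0%nat)%:R.

Definition psum (a : nat -> R) j := \sum_(i < j.+1) a i.

Definition conv_inner (a : nat -> R) n := \sum_(2 <= i < n.-1) a i * a (n - i)%nat.

Lemma psumS (b : nat -> R) j : psum b j.+1 = psum b j + b j.+1.
Proof. by rewrite /psum big_ord_recr. Qed.

Lemma psum0 (b : nat -> R) : psum b 0 = b 0%nat.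
Proof. exact: big_ord1. Qed.

Lemma conv_geomS E (b : nat -> R) m :
  conv (fun j => E ^+ j) b m.+1 = b m.+1 + E * conv (fun j => E ^+ j) b m.
Proof.
rewrite /conv big_ord_recl expr0 mul1r subn0 mulr_sumr; congr (_ + _).
by apply: eq_bigr => i _; rewrite exprS -mulrA.
Qed.

Section PartialSums.
Variable b : nat -> R.
Hypothesis b_ge0 : forall i, 0 <= b i.

Lemma psum_ge0 j : 0 <= psum b j.
Proof. exact: sumr_ge0. Qed.

Lemma le_psum j : b j <= psum b j.
Proof.
case: j => [|j]; first by rewrite psum0.
by rewrite psumS lerDr psum_ge0.
Qed.

Lemma psum_le_psum i j : (i <= j)%nat -> psum b i <= psum b j.
Proof.
move=> /subnK <-; elim: (j - i)%nat => // t IH.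
by rewrite addSn psumS (le_trans IH) // lerDl.
Qed.

Lemma coef1_le_psum j : (1 <= j)%nat -> b 1%nat <= psum b j.
Proof. by move=> j1; apply: le_trans (le_psum 1) (psum_le_psum j1). Qed.

End PartialSums.

Section Convolution.
Variable a : nat -> R.

Lemma conv_pow1 m : conv_pow a 1 m = a m.
Proof.
rewrite /= /conv big_ord_recr /= subnn mulr1 big1 ?add0r // => i _.
by rewrite subn_eq0 leqNgt ltn_ord mulr0.
Qed.

Lemma conv_powS k m : conv_pow a k.+1 m = conv a (conv_pow a k) m.
Proof. by []. Qed.

Lemma conv_psum b m : conv a (psum b) m = psum (conv a b) m.
Proof.
elim: m => [|m IH]; first by rewrite /conv /psum !big_ord1.
rewrite psumS -IH /conv big_ord_recr [X in _ = _ + X]big_ord_recr /= subnn.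
rewrite psum0 addrA -big_split /=.
congr (_ + _); apply: eq_bigr => i _.
by rewrite subSn 1?psumS ?mulrDr // -ltnS.
Qed.

Hypothesis a_ge0 : forall i, 0 <= a i.

Lemma conv_ge0 b m : (forall i, 0 <= b i) -> 0 <= conv a b m.
Proof. by move=> b_ge0; apply: sumr_ge0 => i _; apply: mulr_ge0. Qed.

Lemma conv_pow_ge0 k m : 0 <= conv_pow a k m.
Proof. by elim: k m => [|k IH] m /=; [exact: ler0n | exact: conv_ge0]. Qed.

Lemma conv_inner_ge m : (2 <= m)%nat -> a 2%nat * a m <= conv_inner a m.+2.
Proof.
move=> m2; rewrite /conv_inner big_ltn /=; last lia.
by rewrite subSS subSS subn0 lerDl sumr_ge0 // => i _; apply: mulr_ge0.
Qed.

Hypothesis a0 : a 0%nat = 0.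

Lemma conv_pow_lt k m : (m < k)%nat -> conv_pow a k m = 0.
Proof.
elim: k m => // k IH m mk; rewrite conv_powS; apply: big1 => -[[|s] sm] _.
  by rewrite a0 mul0r.
by rewrite IH ?mulr0 //=; lia.
Qed.

Lemma conv_self_split m :
  conv a a m.+3 = 2 * (a 1%nat * a m.+2) + conv_inner a m.+3.
Proof.
rewrite /conv /conv_inner -(big_mkord xpredT (fun i => a i * a (m.+3 - i)%nat)).
rewrite big_ltn // big_ltn // big_nat_recr //= big_nat_recr //=.
rewrite subn0 subnn subSnn subn1 a0 mul0r mulr0 add0r addr0 /=.
by rewrite [a m.+2 * _]mulrC; ring.
Qed.

Lemma psum_le_tail (b : nat -> R) c N :
  (forall m, 0 <= b m) -> 0 <= c -> (forall m, (N < m)%nat -> b m <= c * a m.-1) ->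
  forall j, psum b j.+1 <= psum b N + c * psum a j.
Proof.
move=> b_ge0 c_ge0 b_le j; case: (ltnP j N) => [jN|].
  by apply: ler_wpDr; [exact: mulr_ge0 c_ge0 (psum_ge0 a_ge0 j) | exact: psum_le_psum].
move: j; apply: nat_ind_from => [|j Nj IH].
  by rewrite psumS lerD2l (le_trans (b_le _ _)) // ler_wpM2l // le_psum.
rewrite psumS [psum a j.+1]psumS mulrDr addrA lerD // b_le //; lia.
Qed.

Lemma conv_pow_le_psum C :
  0 <= C -> (forall j, (1 <= j)%nat -> conv a (psum a) j.+1 <= C * psum a j) ->
  forall k m, conv_pow a k.+1 m <= C ^+ k * psum a (m - k).
Proof.
move=> C0 hC; elim=> [|k IH] m; first by rewrite conv_pow1 expr0 mul1r subn0 le_psum.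
case: (ltnP m k.+2) => [mk|km].
  by rewrite conv_pow_lt // mulr_ge0 ?exprn_ge0 ?psum_ge0.
rewrite conv_powS.
apply: (@le_trans _ _ (\sum_(s < m.+1) C ^+ k * (a s * psum a (m - k - s)))).
  apply: ler_sum => s _; rewrite mulrCA ler_wpM2l //.
  by rewrite -subnDA addnC subnDA IH.
have last_terms_vanish :
    \sum_(s < m.+1) a s * psum a (m - k - s) = conv a (psum a) (m - k).
  rewrite /conv [RHS](big_ord_widen m.+1 (fun s => a s * psum a (m - k - s))); last lia.
  rewrite [RHS]big_mkcond; apply: eq_bigr => s _; case: ifPn => //.
  by rewrite -leqNgt => ?; rewrite (_ : (m - k - s = 0)%nat) ?psum0 ?a0 ?mulr0 //; lia.
rewrite -mulr_sumr exprSr -mulrA ler_wpM2l ?exprn_ge0 // last_terms_vanish.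
have -> : (m - k = (m - k.+1).+1)%nat by lia.
by apply: hC; lia.
Qed.

Lemma conv_pow_tail_le C : 0 <= C ->
  (forall j, (1 <= j)%nat -> conv a (psum a) j.+1 <= C * psum a j) ->
  forall rho, 0 <= rho -> forall m,
  \sum_(2 <= k < m.+2) rho ^+ k * conv_pow a k m.+1 <=
    rho * (rho * C) * conv (fun j => (rho * C) ^+ j) (psum a) m.
Proof.
move=> C_ge0 hC rho rho_ge0 m; have E_ge0 := mulr_ge0 rho_ge0 C_ge0.
rewrite (big_addn 0 _ 2) subSS subSS subn0 big_mkord /conv big_ord_recr /= mulrDr.
rewrite mulr_sumr ler_wpDr ?mulr_ge0 ?exprn_ge0 ?psum_ge0 //.
apply: ler_sum => i _; rewrite addn2.
apply: le_trans (ler_wpM2l (exprn_ge0 _ rho_ge0) (conv_pow_le_psum C_ge0 hC _ _)) _.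
by rewrite subSS exprMn !exprS; lra.
Qed.

End Convolution.

Section Asymptotics.
Variable a : nat -> R.
Hypothesis a_ge0 : forall i, 0 <= a i.
Hypothesis a0 : a 0%nat = 0.
Hypothesis a1_gt0 : 0 < a 1%nat.
Hypothesis a2_gt0 : 0 < a 2%nat.
Hypothesis conv_inner_o :
  forall eps : R, 0 < eps -> eventually (fun n => conv_inner a n <= eps * a n.-1).
Hypothesis a_eventually_gt0 : eventually (fun n => 0 < a n).

Lemma a_o_succ d : 0 < d -> eventually (fun m => a m <= d * a m.+1).
Proof.
move=> d_gt0; have [N HN] := conv_inner_o (mulr_gt0 d_gt0 a2_gt0).
exists (maxn N 2) => m; rewrite geq_max => /andP[Nm m2].
have := le_trans (conv_inner_ge a_ge0 m2) (HN m.+2 (leqW (leqW Nm))).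
by rewrite /= -mulrA mulrCA (ler_pM2l a2_gt0).
Qed.

Lemma conv_self_O : eventually (fun m => conv a a m <= (2 * a 1%nat + 1) * a m.-1).
Proof.
have [N HN] := conv_inner_o ltr01.
exists (maxn N 3) => m; rewrite geq_max => /andP[/HN + m3].
case: m m3 => [|[|[|m]]] // _.
by rewrite mul1r conv_self_split //=; lra.
Qed.

Lemma conv_psum_O :
  exists2 C, 0 <= C & forall j, (1 <= j)%nat -> conv a (psum a) j.+1 <= C * psum a j.
Proof.
have [N HN] := conv_self_O.
have c_ge0 : 0 <= 2 * a 1%nat + 1 by have := a1_gt0; lra.
have aa_ge0 m : 0 <= conv a a m by exact: conv_ge0.
have K_ge0 : 0 <= psum (conv a a) N by exact: psum_ge0.
exists (psum (conv a a) N / a 1%nat + (2 * a 1%nat + 1)) => [|j j1].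
  by rewrite addr_ge0 ?divr_ge0 // ltW.
have := psum_le_tail a_ge0 aa_ge0 c_ge0 (fun m mN => HN m (ltnW mN)) j.
rewrite -conv_psum => /le_trans; apply.
rewrite [leRHS]mulrDl lerD2r -[X in X <= _](divfK (lt0r_neq0 a1_gt0)).
by rewrite ler_wpM2l ?divr_ge0 ?(ltW a1_gt0) //; exact: coef1_le_psum.
Qed.

Lemma psum_O : exists2 B, 0 < B & eventually (fun n => psum a n <= B * a n).
Proof.
have half_gt0 : 0 < 2^-1 :> R by rewrite invr_gt0 ltr0n.
have [[N1 HN1] [N2 HN2]] := (a_o_succ half_gt0, a_eventually_gt0).
set N := maxn N1 N2; have aN_gt0 : 0 < a N by apply: HN2; rewrite leq_maxr.
set B := Num.max 2 (psum a N / a N); have B2 : 2 <= B by rewrite le_max lexx.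
have B_gt0 : 0 < B by apply: lt_le_trans B2; lra.
exists B => //; exists N; apply: nat_ind_from => [|n Nn IH].
  by rewrite -ler_pdivrMr // le_max lexx orbT.
have := ler_wpM2l (ltW B_gt0) (HN1 n (leq_trans (leq_maxl _ _) Nn)).
have : 0 <= (B - 2) * a n.+1 by rewrite mulr_ge0 ?subr_ge0.
clearbody B; rewrite psumS; lra.
Qed.

Lemma psum_o_succ d : 0 < d -> eventually (fun n => psum a n <= d * psum a n.+1).
Proof.
move=> d_gt0; have [B B_gt0 psum_le] := psum_O.
have [N HN] := eventually_and psum_le (a_o_succ (divr_gt0 d_gt0 B_gt0)).
exists N => m /HN [psum_le_m a_le_m]; apply: le_trans psum_le_m _.
apply: le_trans (ler_wpM2l (ltW B_gt0) a_le_m) _.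
by rewrite mulrA mulrCA divff ?gt_eqF // mulr1 ler_wpM2l ?(ltW d_gt0) //; exact: le_psum.
Qed.

(* Z := conv (E ^+ .) (psum a) satisfies Z m.+1 = psum a m.+1 + E * Z m, and
   psum a m = o(psum a m.+1) keeps Z / psum a bounded. *)
Lemma conv_geom_psum_O E : 0 <= E -> exists2 H, 0 <= H &
  eventually (fun m => conv (fun j => E ^+ j) (psum a) m <= H * psum a m).
Proof.
move=> E_ge0; set Z := conv (fun j => E ^+ j) (psum a).
have d_gt0 : 0 < (2 * (E + 1))^-1 by rewrite invr_gt0; lra.
have Ed : E * (2 * (E + 1))^-1 <= 2^-1.
  by rewrite ler_pdivrMr ?mulrA ?mulVf ?mul1r; lra.
have [N0 HN0] := psum_o_succ d_gt0.
set N := maxn N0 1.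
have pN_gt0 : 0 < psum a N.
  exact: lt_le_trans a1_gt0 (coef1_le_psum a_ge0 (leq_maxr _ _)).
set H := Num.max 2 (Z N / psum a N); have H2 : 2 <= H by rewrite le_max lexx.
have H_ge0 : 0 <= H by apply: le_trans H2; lra.
exists H => //; exists N; apply: nat_ind_from => [|m Nm IH].
  by rewrite -ler_pdivrMr // le_max lexx orbT.
have p_ge0 := psum_ge0 a_ge0 m.+1.
have h1 := ler_wpM2l E_ge0 IH.
have h2 := ler_wpM2l (mulr_ge0 E_ge0 H_ge0) (HN0 m (leq_trans (leq_maxl _ _) Nm)).
have h3 := ler_wpM2r (mulr_ge0 H_ge0 p_ge0) Ed.
have : 0 <= (H - 2) * psum a m.+1 by rewrite mulr_ge0 ?subr_ge0.
rewrite /Z conv_geomS -/Z; clearbody H Z; lra.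
Qed.

Lemma conv_pow_tail_o rho : 0 <= rho -> forall eps, 0 < eps ->
  eventually (fun n => \sum_(2 <= k < n.+1) rho ^+ k * conv_pow a k n <= eps * a n).
Proof.
move=> rho_ge0 eps eps_gt0.
have [C C_ge0 hC] := conv_psum_O.
have E_ge0 : 0 <= rho * C by exact: mulr_ge0.
have [H H_ge0 [N1 HN1]] := conv_geom_psum_O E_ge0.
have [B B_gt0 [N2 HN2]] := psum_O.
have K_ge0 : 0 <= rho * (rho * C) * H * B by rewrite !mulr_ge0 // ltW.
have d_gt0 : 0 < eps / (rho * (rho * C) * H * B + 1) by rewrite divr_gt0 //; lra.
have [N3 HN3] := psum_o_succ d_gt0.
apply: eventually_succ; exists (maxn N1 (maxn N2 N3)) => m.
rewrite !geq_max => /and3P[/HN1 Z_le /leqW/HN2 p_le /HN3 p_le_succ].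
apply: le_trans (conv_pow_tail_le a_ge0 a0 C_ge0 hC rho_ge0 m) _.
have rhoE_ge0 : 0 <= rho * (rho * C) by exact: mulr_ge0.
have h1 := ler_wpM2l rhoE_ge0 Z_le.
have h2 := ler_wpM2l (mulr_ge0 rhoE_ge0 H_ge0) p_le_succ.
have h3 := ler_wpM2l (mulr_ge0 (mulr_ge0 rhoE_ge0 H_ge0) (ltW d_gt0)) p_le.
have h4 : rho * (rho * C) * H * B * (eps / (rho * (rho * C) * H * B + 1)) <= eps.
  by rewrite mulrA ler_pdivrMr; lra.
have := ler_wpM2r (a_ge0 m.+1) h4; lra.
Qed.

End Asymptotics.

Lemma sum_by_nat_value (I : finType) (P : pred I) (c : I -> nat) n (F : I -> R) :
  (forall i, P i -> (c i <= n)%nat) ->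
  \sum_(i | P i) F i = \sum_(k < n.+1) \sum_(i | P i && (c i == k)) F i.
Proof.
move=> c_le; rewrite (partition_big (fun i => inord (c i) : 'I_n.+1) xpredT) //.
apply: eq_bigr => k _; apply: eq_bigl => i; apply: andb_id2l => Pi.
by rewrite -(inj_eq val_inj) /= inordK // ltnS c_le.
Qed.

Definition part_weight (T : finType) (g : nat -> R) k (U : {set T}) : R :=
  \sum_(P : {set {set T}} | partition P U && (#|P| == k)) \prod_(B in P) g #|B|.

Section SetPartitions.
Variables (T : finType) (g : nat -> R).

Lemma partition_setU1 (S U : {set T}) (Q : {set {set T}}) :
  S \subset U -> S != set0 -> S \notin Q -> partition (S |: Q) U = partition Q (U :\: S).
Proof.
move=> SU S0 SQ; apply/idP/idP => pQ.
  by have := partitionD1 pQ (setU11 S Q); rewrite setU1K.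
have -> : U = S :|: (U :\: S).
  by apply/setP => x; rewrite !inE; case: (boolP (x \in S)) => // /(subsetP SU) ->.
by apply: partitionU1; rewrite // disjoint_sym disjoints_subset setDE subsetIr.
Qed.

Lemma part_weight0 (U : {set T}) : part_weight g 0 U = (U == set0)%:R.
Proof.
rewrite /part_weight (eq_bigl (fun P => (P == set0) && (U == set0))); last first.
  move=> P; rewrite cards_eq0; have [->|_] := eqVneq P set0; last by rewrite andbF.
  by rewrite /partition /trivIset /cover !big_set0 cards0 inE eqxx !andbT eq_sym.
case: eqVneq => _; last by rewrite big_pred0 // => P; rewrite andbF.
by rewrite (big_pred1 set0) ?big_set0 // => P; rewrite andbT.
Qed.

Hypothesis g0 : g 0%nat = 0.

(* Double counting of the pairs (P, S) with S a block of P: removing S from P leaves a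
   partition of U :\: S into k blocks. *)
Lemma part_weightS k (U : {set T}) : k.+1%:R * part_weight g k.+1 U =
  \sum_(S : {set T} | S \subset U) g #|S| * part_weight g k (U :\: S).
Proof.
rewrite (bigID (fun S => S == set0)) /= big1 ?add0r; last first.
  by move=> S /andP[_ /eqP ->]; rewrite cards0 g0 mul0r.
rewrite /part_weight mulr_sumr.
transitivity (\sum_(P : {set {set T}} | partition P U && (#|P| == k.+1))
   \sum_(S in P) g #|S| * \prod_(B in P :\ S) g #|B|).
  apply: eq_bigr => P /andP[_ /eqP cardP].
  rewrite -cardP mulr_natl -sumr_const; apply: eq_bigr => S SP.
  by rewrite (bigD1 S SP); congr (_ * _); apply: eq_bigl => B; rewrite !inE andbC.
rewrite (exchange_big_dep (fun S : {set T} => (S \subset U) && (S != set0))) /=; last first.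
  by move=> P S /andP[pP _] SP; rewrite (partitionS pP SP) (partition_neq0 pP SP).
apply: eq_bigr => S /andP[SU S0]; rewrite mulr_sumr.
rewrite (reindex_onto (fun Q => S |: Q) (fun P => P :\ S)) /=; last first.
  by move=> P /andP[_ SP]; rewrite setD1K.
apply: eq_big => [Q|Q /andP[_ /eqP QE]]; last first.
  by congr (_ * _); rewrite -{2}QE; apply: eq_bigl => B; rewrite !inE andbC.
case: (boolP (S \in Q)) => SQ; last first.
  by rewrite setU1K // eqxx setU11 cardsU1 SQ partition_setU1 // !andbT.
have -> : ((S |: Q) :\ S == Q) = false.
  by apply/negbTE; apply: contraTneq SQ => <-; rewrite !inE eqxx.
rewrite andbF; apply/esym/negbTE/negP => /andP[pQ _].
by have := partitionS pQ SQ; rewrite subsetD -setI_eq0 setIid (negbTE S0) andbF.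
Qed.

Lemma sum_subsets_card (U : {set T}) (F : nat -> R) :
  \sum_(S : {set T} | S \subset U) F #|S| = \sum_(s < #|U|.+1) 'C(#|U|, s)%:R * F s.
Proof.
rewrite (@sum_by_nat_value _ _ (fun S : {set T} => #|S|) #|U| _
  (fun S => @subset_leq_card _ S U)).
apply: eq_bigr => s _; rewrite -cards_draws mulr_natl -sumr_const.
by apply: eq_big => [S|S /andP[_ /eqP ->]] //; rewrite inE.
Qed.

Lemma part_weightE k (U : {set T}) :
  part_weight g k U = #|U|`!%:R / k`!%:R * conv_pow (egf_coef g) k #|U|.
Proof.
have fact_neq0 m : m`!%:R != 0 :> R by rewrite pnatr_eq0 -lt0n fact_gt0.
elim: k U => [|k IH] U.
  rewrite part_weight0 -cards_eq0 fact0 divr1 /=.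
  by case: eqP => [->|]; rewrite ?mulr1 ?mulr0.
apply: (mulfI (x := k.+1%:R)); first by rewrite pnatr_eq0.
rewrite part_weightS.
under eq_bigr => S SU do rewrite IH cardsDS //.
rewrite (sum_subsets_card U
  (fun s => g s * ((#|U| - s)`!%:R / k`!%:R * conv_pow (egf_coef g) k (#|U| - s)))).
rewrite conv_powS /conv !mulr_sumr; apply: eq_bigr => -[s /=]; rewrite ltnS => sU _.
rewrite -(bin_fact sU) egf_coefE factS !natrM; field.
by rewrite !fact_neq0 addrC natr1 pnatr_eq0.
Qed.

End SetPartitions.

Lemma part_weight_setT (g : nat -> R) n k : g 0%nat = 0 ->
  part_weight g k [set: 'I_n] = n`!%:R / k`!%:R * conv_pow (egf_coef g) k n.
Proof. by move=> g0; rewrite part_weightE // cardsT card_ord. Qed.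

Lemma rsum_listE (I : Type) (F : I -> R) s :
  rsum_list [seq F x | x <- s] = \sum_(x <- s) F x.
Proof. by elim: s => [|x s IH]; rewrite ?big_nil ?big_cons //= IH. Qed.

Lemma rprod_listE (I : Type) (F : I -> R) s :
  rprod_list [seq F x | x <- s] = \prod_(x <- s) F x.
Proof. by elim: s => [|x s IH]; rewrite ?big_nil ?big_cons //= IH. Qed.

Lemma comp_weightE f g n E : comp_weight f g n E =
  \sum_(P : {set {set 'I_n}} | partition P [set: 'I_n] && E P)
    f #|P| * \prod_(B in P) g #|B|.
Proof.
rewrite /comp_weight rsum_listE big_filter big_enum_cond.
apply: eq_big => [P|P _]; first by rewrite /set_partitions inE.
by rewrite rprod_listE big_enum.
Qed.

Lemma partition_card_le n (P : {set {set 'I_n}}) :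
  partition P [set: 'I_n] -> (#|P| <= n)%nat.
Proof.
move=> pP; have := card_partition pP; rewrite cardsT card_ord => cardE.
rewrite [X in (_ <= X)%nat]cardE.
by rewrite -sum1_card leq_sum // => B BP; rewrite card_gt0 (partition_neq0 pP BP).
Qed.

Lemma comp_weight_card f g n (E : pred nat) :
  comp_weight f g n (fun P => E #|P|) =
  \sum_(k < n.+1 | E k) f k * part_weight g k [set: 'I_n].
Proof.
rewrite comp_weightE (sum_by_nat_value _ (fun P pP => partition_card_le (andP pP).1)).
rewrite [RHS]big_mkcond; apply: eq_bigr => k _; rewrite /part_weight mulr_sumr.
case: ifPn => Ek; last first.
  rewrite big_pred0 // => P; apply/negP => /andP[/andP[_ +] /eqP cardP].
  by rewrite cardP (negbTE Ek).
apply: eq_big => [P|P /andP[_ /eqP ->]] //.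
by rewrite -andbA; case: eqP => [->|]; rewrite ?Ek ?andbF.
Qed.

Lemma comp_weight_split f g n :
  comp_weight f g n (fun _ => true) =
  comp_weight f g n (fun P => #|P| == 1%nat) + comp_weight f g n (fun P => #|P| != 1%nat).
Proof.
rewrite !comp_weightE (bigID (fun P : {set {set 'I_n}} => #|P| == 1%nat)) /=.
by congr (_ + _); apply: eq_bigl => P; rewrite andbT.
Qed.

Lemma sum_ord_neq1 (G : nat -> R) n : G 0%nat = 0 ->
  \sum_(k < n.+2 | (k : nat) != 1%nat) G k = \sum_(2 <= k < n.+2) G k.
Proof.
move=> G0; rewrite big_mkcond /=.
rewrite -(big_mkord xpredT (fun k => if k != 1%nat then G k else 0)) big_ltn // big_ltn //=.
by rewrite G0 !add0r; apply: eq_big_nat => k /andP[k2 _]; case: eqP k2 => // ->.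
Qed.

Lemma ratio_close_to_one (S Q eps : R) :
  0 < S -> 0 <= Q -> Q <= eps * S -> `|S / (S + Q) - 1| <= eps.
Proof.
move=> S_gt0 Q_ge0 Q_le; have SQ_gt0 : 0 < S + Q by lra.
have -> : S / (S + Q) - 1 = - (Q / (S + Q)) by field; lra.
rewrite normrN ger0_norm ?divr_ge0 ?(ltW SQ_gt0) // ler_pdivrMr //.
have eps_ge0 : 0 <= eps by rewrite -(pmulr_lge0 _ S_gt0); exact: le_trans Q_le.
by have := mulr_ge0 eps_ge0 Q_ge0; lra.
Qed.

Section CompositeStructures.
Variables (f g : nat -> R) (l rho : R).
Hypothesis f_ge0 : forall n, 0 <= f n.
Hypothesis g_ge0 : forall n, 0 <= g n.
Hypothesis g0 : g 0%nat = 0.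
Hypothesis rho_ge0 : 0 <= rho.
Hypothesis egf_f_le : forall k, egf_coef f k <= l * rho ^+ k.

Let a_ge0 i : 0 <= egf_coef g i.
Proof. by rewrite egf_coefE divr_ge0 ?ler0n. Qed.

Lemma comp_weight_single n :
  comp_weight f g n.+1 (fun P => #|P| == 1%nat) = f 1%nat * (n.+1`!%:R * egf_coef g n.+1).
Proof.
rewrite (comp_weight_card f g n.+1 (fun k => k == 1%nat)).
rewrite (big_pred1 (Ordinal (erefl : (1 < n.+2)%nat))) //.
by rewrite part_weight_setT // conv_pow1 divr1.
Qed.

Lemma comp_weight_rest_le n :
  comp_weight f g n.+1 (fun P => #|P| != 1%nat) <=
  n.+1`!%:R * l * \sum_(2 <= k < n.+2) rho ^+ k * conv_pow (egf_coef g) k n.+1.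
Proof.
rewrite (comp_weight_card f g n.+1 (fun k => k != 1%nat)).
rewrite -sum_ord_neq1 ?expr0 ?mul1r // mulr_sumr; apply: ler_sum => k _.
rewrite part_weight_setT //.
have cp_ge0 := conv_pow_ge0 a_ge0 k n.+1.
have h := ler_wpM2r cp_ge0 (egf_f_le k).
have := ler_wpM2l (ler0n _ n.+1`!) h.
by rewrite egf_coefE; lra.
Qed.

Lemma comp_weight_ge0 n E : 0 <= comp_weight f g n E.
Proof.
rewrite comp_weightE; apply: sumr_ge0 => P _.
by rewrite mulr_ge0 // prodr_ge0.
Qed.

Hypothesis f1_gt0 : 0 < f 1%nat.
Hypothesis a1_gt0 : 0 < egf_coef g 1.
Hypothesis a2_gt0 : 0 < egf_coef g 2.
Hypothesis conv_inner_o : forall eps : R, 0 < eps ->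
  eventually (fun n => conv_inner (egf_coef g) n <= eps * egf_coef g n.-1).
Hypothesis a_eventually_gt0 : eventually (fun n => 0 < egf_coef g n).

Theorem prob_single_component_close_to_one eps : 0 < eps ->
  eventually (fun n => `|prob_single_component f g n - 1| <= eps).
Proof.
move=> eps_gt0.
have l_ge0 : 0 <= l.
  have := egf_f_le 0; rewrite expr0 mulr1; apply: le_trans.
  by rewrite egf_coefE divr_ge0.
have a0 : egf_coef g 0 = 0 by rewrite egf_coefE g0 mul0r.
have eps'_gt0 : 0 < eps * f 1%nat / (l + 1) by rewrite !divr_gt0 ?mulr_gt0 //; lra.
have tail_small := conv_pow_tail_o a_ge0 a0 a1_gt0 a2_gt0 conv_inner_o a_eventually_gt0
  rho_ge0 eps'_gt0.
have [N HN] := eventually_and tail_small a_eventually_gt0.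
apply: eventually_succ; exists N => n /leqW /HN [tail_le an_gt0].
rewrite /prob_single_component RdivE comp_weight_split comp_weight_single.
apply: ratio_close_to_one.
- by rewrite mulr_gt0 // mulr_gt0 // ltr0n fact_gt0.
- exact: comp_weight_ge0.
apply: le_trans (comp_weight_rest_le n) _.
have F_ge0 : 0 <= n.+1`!%:R :> R := ler0n _ _.
have h1 := ler_wpM2l (mulr_ge0 F_ge0 l_ge0) tail_le.
have h2 : l / (l + 1) <= 1 by rewrite ler_pdivrMr; lra.
have X_ge0 := mulr_ge0 F_ge0 (ltW (mulr_gt0 (mulr_gt0 eps_gt0 f1_gt0) an_gt0)).
by have := ler_wpM2r X_ge0 h2; lra.
Qed.

End CompositeStructures.

Lemma Un_cv_eventually (u : nat -> R) l :
  (forall eps, 0 < eps -> eventually (fun n => `|u n - l| <= eps)) -> Un_cv u l.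
Proof.
move=> u_close eps eps_pos; have eps_gt0 : 0 < eps by apply/RltP.
have [N HN] := u_close (eps / 2) (divr_gt0 eps_gt0 (ltr0n _ 2)).
exists N => n /ssrnat.leP /HN; rewrite RdistE => close; apply/RltP.
by apply: le_lt_trans close _; rewrite ltr_pdivrMr ?ltr0n //; lra.
Qed.

Lemma Pser_coef_le (c : nat -> R) (x l : R) :
  (forall k, 0 <= c k) -> 0 < x -> Pser c x l -> forall k, c k <= l * x^-1 ^+ k.
Proof.
move=> c_ge0 x_gt0 cx_l k.
have t_ge0 m : 0 <= Rmult (c m) (pow x m).
  by rewrite RmultE RpowE mulr_ge0 ?exprn_ge0 ?(ltW x_gt0).
have growing : Un_growing (sum_f_R0 (fun m => Rmult (c m) (pow x m))).
  by move=> m; apply/RleP; rewrite !sum_f_R0E [leRHS]big_nat_recr //= lerDl.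
have := growing_ineq _ _ growing cx_l k; rewrite sum_f_R0E big_nat_recr //= => /RleP.
rewrite exprVn ler_pdivlMr ?exprn_gt0 // RmultE RpowE => /(le_trans _); apply.
by rewrite lerDr sumr_ge0.
Qed.

Lemma period_one (c : nat -> R) d : (1 <= d)%nat ->
  (forall i, (i mod d)%nat <> (1 mod d)%nat -> c i = 0) -> c 2%nat != 0 -> d = 1%nat.
Proof.
move=> d_ge1 c_eq0 c2_neq0; apply/eqP; apply: contraNT c2_neq0 => d_neq1.
apply/eqP/c_eq0; case: (eqVneq d 2) => [-> //|d_neq2].
by rewrite !Nat.mod_small; lia.
Qed.

Lemma csumS e k n m : csum e k.+1 n m =
  \sum_(1 <= i < m) (if (i <= n)%nat then e i * csum e k (n - i) m else 0).
Proof. by rewrite /= rsum_listE. Qed.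

Lemma csum_one e j m : csum e 1 j m = if (0 < j < m)%nat then e j else 0.
Proof.
rewrite csumS -(@big_nat1_eq _ 0 +%R e j 1 m) big_mkcond /=.
apply: eq_bigr => x _; rewrite subn_eq0.
by case: ltngtP => [||->]; rewrite ?RmultE ?mulr0 ?mulr1.
Qed.

Lemma conv_sum_two e n : conv_sum e 2 n = conv_inner e n.
Proof.
rewrite /conv_sum /conv_inner csumS subSS subn0 subn1.
case: (ltnP 1 n.-1) => [n_gt2|n_le2]; last by rewrite !big_geq // (leq_trans n_le2).
rewrite big_ltn // csum_one subn1 ltnn andbF mulr0 if_same add0r.
by apply: eq_big_nat => i /andP[i2 i_lt]; rewrite csum_one !ifT //; lia.
Qed.

Local Close Scope ring_scope.
Delimit Scope ring_scope with ring.
Delimit Scope R_scope with R.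

Theorem mainTheorem10 (f g : nat -> R)
  (* total weights |F[n]|_upsilon, |G[n]|_gamma : nonnegative, G[empty] = empty *)
  (hf : forall n, (0 <= f n)%R)
  (hg : forall n, (0 <= g n)%R)
  (hg0 : g 0%nat = 0%R)
  (* G^gamma(z) = sum a_i z^i has radius of convergence 0 *)
  (hGrad : forall x : R, x <> 0%R -> ~ (exists l, Pser (egf_coef g) x l))
  (* F^upsilon(z) has positive radius of convergence *)
  (hFrad : exists x : R, (0 < x)%R /\ exists l, Pser (egf_coef f) x l)
  (* periodicity / eventual positivity for some d >= 1 *)
  (hper : exists d : nat, (1 <= d)%nat /\
      (forall i, (i mod d)%nat <> (1 mod d)%nat -> egf_coef g i = 0%R) /\
      exists I : nat, forall i, (I <= i)%nat -> (i mod d)%nat = (1 mod d)%nat ->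
        (0 < egf_coef g i)%R)
  (* sum_{i_1+..+i_k=n, 1<=i_j<n-(k-1)} a_{i_1}..a_{i_k} = o(a_{n-(k-1)}) *)
  (hlittleo : forall k : nat, (2 <= k)%nat ->
      forall eps : R, (0 < eps)%R -> exists N : nat, forall n : nat, (N <= n)%nat ->
        (Rabs (conv_sum (egf_coef g) k n) <= eps * egf_coef g (n - (k - 1)))%R)
  (* additional hypotheses *)
  (hF1 : (0 < egf_coef f 1)%R)
  (ha1 : (0 < egf_coef g 1)%R)
  (ha2 : (0 < egf_coef g 2)%R) :
  Un_cv (prob_single_component f g) 1%R.
Proof.
(* hGrad and the cases k > 2 of hlittleo are not needed (radius 0 follows from
   a_(n-1) = o(a_n)), and a_2 > 0 forces the period d to be 1. *)
have f_ge0 n : (0 <= f n)%ring by apply/RleP.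
have g_ge0 n : (0 <= g n)%ring by apply/RleP.
have [x [/RltP x_gt0 [l f_sum]]] := hFrad.
have egf_f_ge0 k : (0 <= egf_coef f k)%ring by rewrite egf_coefE divr_ge0.
have [d [d_ge1 [g_eq0 [I g_gt0]]]] := hper.
have a2_gt0 : (0 < egf_coef g 2)%ring by apply/RltP.
have d_eq1 := period_one d_ge1 g_eq0 (lt0r_neq0 a2_gt0).
apply: Un_cv_eventually.
have egf_f_le := Pser_coef_le egf_f_ge0 x_gt0 f_sum.
apply: (prob_single_component_close_to_one f_ge0 g_ge0 hg0 _ egf_f_le).
- by rewrite invr_ge0 ltW.
- by move/RltP: hF1; rewrite egf_coefE divr1.
- exact/RltP.
- exact: a2_gt0.
- move=> eps /RltP /(hlittleo 2 isT) [N HN]; exists N => n /HN.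
  rewrite conv_sum_two RabsE subSS subn0 subn1 => /RleP.
  exact: le_trans (ler_norm _).
- exists I => i Ii; apply/RltP; apply: g_gt0 => //.
  by rewrite d_eq1 !Nat.mod_1_r.
Qed.
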